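(* Let $S$ be a finite set of endomorphisms of $\mathbb{P}^N$, all of degree at least $2$, let $C_S:=\max\{\sup_{\phi\in S}C(\phi),1\}$, let $K/\mathbb{Q}$ be a finite extension over which every map in $S$ is defined, let $P\in\mathbb{P}^N(K)$, and let $F_{P,S}:=\{Q\in\mathrm{Orb}_S(P):h(Q)\leq 2C_S\}$. If $\gamma\in\Phi_S$ satisfies $\hat h_\gamma(P)=0$, then $\mathrm{Orb}_\gamma(P)\subseteq F_{P,S}$.
   Context: $h$ is the absolute Weil height. For an endomorphism $\phi$ of degree $d_\phi$, $C(\phi)=\sup_{Q\in\mathbb{P}^N(\overline{\mathbb{Q}})}|h(\phi(Q))-d_\phi h(Q)|$. $\mathrm{Orb}_S(P)=\{\rho(P):\rho\in M_S\}$, where $M_S$ is the monoid of the identity and all finite compositions of elements of $S$. $\Phi_S=\prod_{i=1}^\infty S$; for $\gamma=(\theta_1,\theta_2,\dots)$, $\gamma_n=\theta_n\circ\cdots\circ\theta_1$, $\mathrm{Orb}_\gamma(P)=\{P,\gamma_1(P),\gamma_2(P),\dots\}$, and $\hat h_\gamma(P)=\lim_{n\to\infty}h(\gamma_n(P))/\deg(\gamma_n)$ (this limit exists). *)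

From HB Require Import structures.
From mathcomp Require Import all_boot all_order all_algebra all_field.
From mathcomp Require Import all_classical all_reals all_analysis.
From mathcomp Require Import Rstruct Rstruct_topology finmap.
From mathcomp Require mpoly.
From Stdlib Require Import ClassicalEpsilon.

Set Implicit Arguments.
Unset Strict Implicit.
Unset Printing Implicit Defensive.

Import Order.TTheory GRing.Theory Num.Theory.
Import numFieldNormedType.Exports.
Local Open Scope classical_set_scope.
Local Open Scope ring_scope.

Definition RR := Rdefinitions.R.

Definition vec (N : nat) := 'I_N.+1 -> algC.

Definition nonzero_vec N (x : vec N) : Prop := exists i, x i != 0.

Definition proj_eq N (x y : vec N) : Prop :=
  exists c : algC, c != 0 /\ forall i, y i = c * x i.

(* ---------- real value of a nonnegative real algebraic number ------------ *)
Definition toR (x : algC) : RR :=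
  sup [set r : RR | exists q : rat, r = ratr q /\ (ratr q : algC) <= x].

Definition is_padic_abs (p : nat) (v : algC -> RR) : Prop :=
  [/\ forall x, 0 <= v x,
      forall x, v x = 0 <-> x = 0,
      forall x y, v (x * y) = v x * v y,
      forall x y, v (x + y) <= Num.max (v x) (v y)
    & v p%:R = (p%:R)^-1].

Definition padic_abs (p : nat) : algC -> RR :=
  epsilon (inhabits (fun _ => 0)) (is_padic_abs p).

(* the (finite) set of Galois conjugates of x: its images under all field
   embeddings Qbar -> Qbar (= automorphisms of Qbar over Q) *)
Definition gal_orbit N (x : vec N) : set (vec N) :=
  [set y | exists tau : {rmorphism algC -> algC}, y = (fun i => tau (x i))].

Definition log_max_arch N (y : vec N) : RR :=
  ln (\big[Num.max/0]_(i < N.+1) toR `|y i|).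

Definition log_max_padic N (p : nat) (y : vec N) : RR :=
  ln (\big[Num.max/0]_(i < N.+1) padic_abs p (y i)).

(* absolute logarithmic Weil height of the point [x_0 : ... : x_N]:
   h(x) = 1/[K:Q] sum_{sigma : K -> Qbar} ( log max_i |sigma x_i|_oo
          + sum_p log max_i |sigma x_i|_p ),  K = Q(x_0,...,x_N);
   the embeddings sigma of K correspond to the Galois conjugates of x. *)
Definition weil_height N (x : vec N) : RR :=
  let O := fset_set (gal_orbit x) in
  ((#|` O|)%fset%:R)^-1 *
  (\sum_(y <- O)
     (log_max_arch y +
      (\sum_(p \in [set p : nat | prime p]) log_max_padic p y)%R))%R.

Definition homogeneous n (d : nat) (f : mpoly.mpoly n algC) : Prop :=
  forall m, mpoly.mcoeff m f != 0 -> mpoly.mdeg m = d.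

Record endo (N : nat) := Endo {
  comp : 'I_N.+1 -> mpoly.mpoly N.+1 algC;
  degree : nat;
  comp_homog : forall i, homogeneous degree (comp i);
  comp_nozero : forall x : vec N, nonzero_vec x ->
                  exists i, mpoly.meval x (comp i) != 0
}.

Definition apply_endo N (phi : endo N) (x : vec N) : vec N :=
  fun i => mpoly.meval x (comp phi i).

Definition Cconst N (phi : endo N) : \bar RR :=
  ereal_sup [set (`| weil_height (apply_endo phi x)
                    - (degree phi)%:R * weil_height x |)%:E
            | x in [set x : vec N | nonzero_vec x]].

Definition CS N (I : finType) (S : I -> endo N) : \bar RR :=
  Order.max (ereal_sup [set Cconst (S i) | i in [set: I]]) 1%:E.

(* a word w = [:: i1; ...; ik] acts as S ik o ... o S i1 (element of M_S) *)
Definition apply_word N (I : finType) (S : I -> endo N) (w : seq I)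
    (x : vec N) : vec N :=
  foldl (fun y i => apply_endo (S i) y) x w.

Definition OrbS N (I : finType) (S : I -> endo N) (P : vec N) : set (vec N) :=
  [set Q | exists w : seq I, proj_eq (apply_word S w P) Q].

Definition FPS N (I : finType) (S : I -> endo N) (P : vec N) : set (vec N) :=
  [set Q | OrbS S P Q /\ ((weil_height Q)%:E <= 2%:E * CS S)%E].

(* gamma = (theta_1, theta_2, ...) in Phi_S, encoded by gamma : nat -> I with
   theta_{k+1} = S (gamma k);  gamma_n = theta_n o ... o theta_1 *)
Fixpoint gamma_pt N (I : finType) (S : I -> endo N) (gamma : nat -> I)
    (P : vec N) (n : nat) : vec N :=
  match n with
  | 0 => P
  | k.+1 => apply_endo (S (gamma k)) (gamma_pt S gamma P k)
  end.

Definition gamma_deg N (I : finType) (S : I -> endo N) (gamma : nat -> I)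
    (n : nat) : nat :=
  (\prod_(k < n) degree (S (gamma k)))%N.

Definition Orbgamma N (I : finType) (S : I -> endo N) (gamma : nat -> I)
    (P : vec N) : set (vec N) :=
  [set Q | exists n, Q = gamma_pt S gamma P n].

Definition number_field (K : pred algC) : Prop :=
  [/\ 0 \in K /\ 1 \in K,
      {in K &, forall x y, x - y \in K},
      {in K &, forall x y, x * y \in K},
      {in K, forall x, x^-1 \in K}
    & exists b : seq algC, all (mem K) b /\
        forall x, x \in K -> exists c : seq rat,
          x = \sum_(k < size b) ratr (nth 0 c k) * nth 0 b k].

Definition endo_defined_over N (K : pred algC) (phi : endo N) : Prop :=
  exists c : algC, c != 0 /\
    forall i m, c * mpoly.mcoeff m (comp phi i) \in K.

Definition point_over N (K : pred algC) (P : vec N) : Prop :=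
  exists c : algC, c != 0 /\ forall i, c * P i \in K.

(* If theta has degree d >= 2 then h(theta Q) >= d h(Q) - C_S, so the sequence
   (h(gamma_n P) - C_S) / deg(gamma_n) is nondecreasing.  It is dominated by
   h(gamma_n P) / deg(gamma_n), which tends to hhat_gamma(P) = 0, so all its
   terms are <= 0: every point of the gamma-orbit has height at most C_S. *)
From HB Require Import structures.
From mathcomp Require Import all_boot all_order all_algebra all_field.
From mathcomp Require Import all_classical all_reals all_analysis.
From mathcomp Require Import Rstruct Rstruct_topology.
From mathcomp Require Import ring lra.

Set Implicit Arguments.
Unset Strict Implicit.
Unset Printing Implicit Defensive.
Import Order.TTheory GRing.Theory Num.Theory.
Import numFieldNormedType.Exports.
Local Open Scope classical_set_scope.
Local Open Scope ring_scope.

Lemma le_normalized_shift_step (R : realFieldType) (r D d h h' : R) :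
  0 <= r -> 2 <= d -> 0 < D -> d * h - r <= h' ->
  (h - r) / D <= (h' - r) / (D * d).
Proof.
move=> r_ge0 d_ge2 D_gt0 growth.
have -> : (h - r) / D = (d * (h - r)) / (D * d).
  by field; apply/andP; split; rewrite gt_eqF //; lra.
by apply: ler_wpM2r; [rewrite invr_ge0 mulr_ge0 //; lra | nra].
Qed.

Lemma nondecreasing_le0_of_dominated_cvg0 (R : realType) (u v : R^nat) n :
  (forall m, u m <= u m.+1) -> (forall m, u m <= v m) ->
  v @ \oo --> 0 -> u n <= 0.
Proof.
move=> u_incr u_le_v v_cvg0.
have <- : lim (v @ \oo) = 0 by exact: cvg_lim.
apply: limr_ge; first by apply/cvg_ex; exists 0.
exists n => // m /= le_nm.
apply: le_trans (u_le_v m).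
have u_homo : {homo u : p q / (p <= q)%N >-> p <= q}.
  by apply: homo_leq => // p q s; exact: le_trans.
exact: u_homo le_nm.
Qed.

Lemma le_of_normalized_cvg0 (R : realType) (r : R) (d : nat -> nat)
    (h : R^nat) :
  0 <= r -> (forall m, (2 <= d m)%N) ->
  (forall m, (d m)%:R * h m - r <= h m.+1) ->
  (fun n => h n / (\prod_(k < n) d k)%:R) @ \oo --> 0 ->
  forall n, h n <= r.
Proof.
move=> r_ge0 d_ge2 growth h_cvg0 n.
pose D m : R := (\prod_(k < m) d k)%:R.
have D_gt0 m : 0 < D m.
  by rewrite ltr0n prodn_gt0 // => k; rewrite (leq_trans _ (d_ge2 k)).
have : (h n - r) / D n <= 0.
  apply: (nondecreasing_le0_of_dominated_cvg0 (u := fun m => (h m - r) / D m)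
          n _ _ h_cvg0) => m.
    rewrite /D big_ord_recr natrM /=.
    by apply: le_normalized_shift_step; rewrite ?ler_nat ?D_gt0.
  by apply: ler_wpM2r; [rewrite invr_ge0 ltW | lra].
by rewrite ler_pdivrMr // mul0r subr_le0.
Qed.

Section EndomorphismFamily.
Variables (N : nat) (I : finType) (S : I -> endo N).

Lemma gamma_pt_nonzero gamma P n :
  nonzero_vec P -> nonzero_vec (gamma_pt S gamma P n).
Proof.
move=> nzP; elim: n => [|n IH] //=.
have [i Hi] := comp_nozero (S (gamma n)) IH.
by exists i.
Qed.

Lemma apply_word_gamma_pt gamma P n :
  apply_word S [seq gamma k | k <- iota 0 n] P = gamma_pt S gamma P n.
Proof.
elim: n => [|n IH] //.
rewrite /apply_word in IH *.
by rewrite -addn1 iotaD add0n map_cat foldl_cat IH addn1.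
Qed.

Lemma Orbgamma_sub_OrbS gamma P : Orbgamma S gamma P `<=` OrbS S P.
Proof.
move=> _ [n ->]; exists [seq gamma k | k <- iota 0 n]; exists 1.
by split=> [|i]; rewrite ?oner_neq0 // apply_word_gamma_pt mul1r.
Qed.

Lemma CS_ge1 : (1%:E <= CS S)%E.
Proof. by rewrite /CS le_max lexx orbT. Qed.

Lemma height_defect_le_CS i (x : vec N) r : nonzero_vec x -> CS S = r%:E ->
  `| weil_height (apply_endo (S i) x)
     - (degree (S i))%:R * weil_height x | <= r.
Proof.
move=> nzx CS_r; rewrite -lee_fin -CS_r.
have Cconst_le_CS : (Cconst (S i) <= CS S)%E.
  by rewrite /CS le_max ereal_sup_ubound //; exists i.
by apply: le_trans Cconst_le_CS; apply: ereal_sup_ubound; exists x.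
Qed.

Lemma weil_height_gamma_pt_le gamma P r :
  (forall i, (2 <= degree (S i))%N) -> nonzero_vec P -> CS S = r%:E ->
  (fun n => weil_height (gamma_pt S gamma P n) / (gamma_deg S gamma n)%:R)
     @ \oo --> (0 : RR) ->
  forall n, weil_height (gamma_pt S gamma P n) <= r.
Proof.
move=> deg_ge2 nzP CS_r.
apply: (le_of_normalized_cvg0 (d := fun k => degree (S (gamma k)))
  (h := fun n => weil_height (gamma_pt S gamma P n))) => [|m|m].
- by have := CS_ge1; rewrite CS_r lee_fin; lra.
- exact: deg_ge2.
- have := height_defect_le_CS (gamma m) (gamma_pt_nonzero gamma m nzP) CS_r.
  by rewrite ler_norml => /andP[lower _] /=; lra.
Qed.

End EndomorphismFamily.

Theorem lemma4p3 (N : nat) (I : finType) (S : I -> endo N)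
  (K : pred algC) (P : vec N) (gamma : nat -> I) :
  (forall i, (2 <= degree (S i))%N) ->
  number_field K ->
  (forall i, endo_defined_over K (S i)) ->
  nonzero_vec P ->
  point_over K P ->
  (fun n => weil_height (gamma_pt S gamma P n) / (gamma_deg S gamma n)%:R)
     @ \oo --> (0 : RR) ->
  Orbgamma S gamma P `<=` FPS S P.
Proof.
move=> deg_ge2 _ _ nzP _ hhat0 Q orbQ.
split; first exact: (Orbgamma_sub_OrbS orbQ).
case: orbQ => n ->.
have := CS_ge1 S; case CS_r: (CS S) => [r| |] // CS_r_ge1.
  have h_le_r := weil_height_gamma_pt_le deg_ge2 nzP CS_r hhat0 n.
  by rewrite -EFinM lee_fin; move: CS_r_ge1; rewrite lee_fin; lra.
by rewrite mulry gtr0_sg // mul1e leey.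
Qed.
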